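(* Let $T_0,T_1,A,B,C\subseteq\mathbb{N}$ with $T_0,T_1$ of total enumeration degree, $T_0<_e A$ and $T_1<_e A$. If $\{A,B\}$ is a nontrivial $\mathcal{K}_{T_0}$-pair and $\{A,C\}$ is a nontrivial $\mathcal{K}_{T_1}$-pair, then $T_0\equiv_e T_1$. In particular, $\{A,B\oplus C\}$ is a nontrivial $\mathcal{K}_{T_0}$-pair.
   Context: Enumeration reducibility: $A\le_e B$ if $A=\Gamma(B):=\{n:\exists D\subseteq B,\ \langle n,D\rangle\in\Gamma\}$ for some c.e. set $\Gamma$ of pairs $\langle n,D\rangle$ with $D$ finite; $A\equiv_e B$ iff $A\le_e B\le_e A$; $A<_e B$ iff $A\le_e B$ and $B\not\le_e A$. A set $T$ has total degree if $T\equiv_e X\oplus(\mathbb{N}\setminus X)$ for some $X$, where $X\oplus Y=\{2n:n\in X\}\cup\{2n+1:n\in Y\}$. $\mathcal{K}_U$-pair: $\{A,B\}$ is a $\mathcal{K}_U$-pair if there is $W\le_e U$ with $\{\langle a,b\rangle: a\in A, b\in B\}\subseteq W$ and $\{\langle a,b\rangle: a\notin A, b\notin B\}\cap W=\varnothing$; it is nontrivial if $A\not\le_e U$ and $B\not\le_e U$. *)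

From Stdlib Require Import Arith List.
Import ListNotations.

Inductive recf : Type :=
| RZero : recf
| RSucc : recf
| RProj : nat -> recf
| RComp : recf -> list recf -> recf
| RPrim : recf -> recf -> recf          (* primitive recursion on the first argument *)
| RMu   : recf -> recf.                 (* least y with f (y :: xs) = 0, all earlier defined *)

Inductive eval : recf -> list nat -> nat -> Prop :=
| ev_zero : forall xs, eval RZero xs 0
| ev_succ : forall x xs, eval RSucc (x :: xs) (S x)
| ev_proj : forall i xs, i < length xs -> eval (RProj i) xs (nth i xs 0)
| ev_comp : forall f gs xs ys y,
    evals gs xs ys -> eval f ys y -> eval (RComp f gs) xs y
| ev_prim0 : forall f g xs y, eval f xs y -> eval (RPrim f g) (0 :: xs) y
| ev_primS : forall f g n xs r y,
    eval (RPrim f g) (n :: xs) r -> eval g (n :: r :: xs) y ->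
    eval (RPrim f g) (S n :: xs) y
| ev_mu : forall f xs y,
    eval f (y :: xs) 0 ->
    (forall z, z < y -> exists v, eval f (z :: xs) (S v)) ->
    eval (RMu f) xs y
with evals : list recf -> list nat -> list nat -> Prop :=
| evs_nil : forall xs, evals [] xs []
| evs_cons : forall g gs xs y ys,
    eval g xs y -> evals gs xs ys -> evals (g :: gs) xs (y :: ys).

Definition ce (W : nat -> Prop) : Prop :=
  exists f : recf, forall n, W n <-> exists y, eval f [n] y.

Definition pair (a b : nat) : nat := (a + b) * (a + b + 1) / 2 + b.

(** Canonical index of finite sets: D_u = { i | bit i of u is 1 }. *)
Definition canfin (u i : nat) : Prop := Nat.testbit u i = true.

Definition enum_op (Gamma : nat -> Prop) (B : nat -> Prop) : nat -> Prop :=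
  fun n => exists u, Gamma (pair n u) /\ (forall i, canfin u i -> B i).

Definition ered (A B : nat -> Prop) : Prop :=
  exists Gamma, ce Gamma /\ forall n, A n <-> enum_op Gamma B n.

Definition eequiv (A B : nat -> Prop) : Prop := ered A B /\ ered B A.
Definition elt (A B : nat -> Prop) : Prop := ered A B /\ ~ ered B A.

Definition join (X Y : nat -> Prop) : nat -> Prop :=
  fun m => (exists n, m = 2 * n /\ X n) \/ (exists n, m = 2 * n + 1 /\ Y n).

Definition total_degree (T : nat -> Prop) : Prop :=
  exists X : nat -> Prop, eequiv T (join X (fun n => ~ X n)).

Definition KPair (U A B : nat -> Prop) : Prop :=
  exists W : nat -> Prop, ered W U /\
    (forall a b, A a -> B b -> W (pair a b)) /\
    (forall a b, ~ A a -> ~ B b -> ~ W (pair a b)).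

Definition nontrivial_KPair (U A B : nat -> Prop) : Prop :=
  KPair U A B /\ ~ ered A U /\ ~ ered B U.

(* Write [Z = X (+) ~X] for a total set below [A], reducible to [A] via an operator [G], and let
   [W <=_e U] witness that [{A, B}] is a K_U-pair.  Applying [G] to the column
   [W_b = {a | <a, b> in W}] gives [G(W_b) ⊇ Z] when [b ∈ B] (then [A ⊆ W_b]) and [G(W_b) ⊆ Z]
   when [b ∉ B] (then [W_b ⊆ A]).  The set of [b] for which [G(W_b)] contains a complementary
   pair [2n, 2n+1] is enumeration reducible to [U] and contained in [B]; as [B] is not, some
   [b ∈ B] has a consistent [G(W_b) ⊇ Z], i.e. [G(W_b) = Z], so [Z <=_e U].  Applied to both
   pairs this gives [T_0 ≡_e T_1], after which the two witnesses interleave into one for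
   [{A, B ⊕ C}].

   The enumeration operators involved are shown to be c.e. by expressing them in a small
   first-order language whose formulas all define c.e. sets: bounded evaluation of
   mu-recursive programs is computable, so c.e. sets are the Sigma_1 relations, which are
   closed under the connectives of the language. *)

From Stdlib Require Import Arith List Lia Classical.
Import ListNotations.

(** * Computable functions *)

Definition computable (n : nat) (F : list nat -> nat) : Prop :=
  exists f, forall xs, length xs = n -> eval f xs (F xs).

Lemma computable_ext n F G :
  computable n F -> (forall xs, length xs = n -> F xs = G xs) -> computable n G.
Proof. intros [f Hf] E. exists f. intros xs L. rewrite <- E by exact L. auto. Qed.

Lemma computable_proj n i : computable n (fun xs => nth i xs 0).
Proof.
  destruct (Nat.lt_ge_cases i n) as [h|h].
  - exists (RProj i). intros xs L. constructor. lia.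
  - exists RZero. intros xs L. rewrite nth_overflow by lia. constructor.
Qed.

Fixpoint recf_const (c : nat) : recf :=
  match c with 0 => RZero | S c' => RComp RSucc [recf_const c'] end.

Lemma eval_recf_const c xs : eval (recf_const c) xs c.
Proof. induction c; simpl; repeat econstructor. exact IHc. Qed.

Lemma computable_const n c : computable n (fun _ => c).
Proof. exists (recf_const c). intros; apply eval_recf_const. Qed.

Lemma computable_comp m n F Gs : computable m F -> Forall (computable n) Gs -> length Gs = m ->
  computable n (fun xs => F (map (fun G => G xs) Gs)).
Proof.
  intros [f Hf] HG L.
  assert (exists gs, forall xs, length xs = n -> evals gs xs (map (fun G => G xs) Gs)) as [gs Hgs].
  { clear L Hf. induction HG as [|G Gs [g Hg] _ [gs IH]].
    - exists []. intros; constructor.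
    - exists (g :: gs). intros xs L; simpl; constructor; auto. }
  exists (RComp f gs). intros xs Lx. econstructor; [apply Hgs, Lx|]. apply Hf. rewrite length_map; auto.
Qed.

Definition natrec (b : nat) (s : nat -> nat -> nat) (k : nat) : nat := nat_rect (fun _ => nat) b s k.

Lemma computable_prim_rec n F G : computable n F -> computable (S (S n)) G ->
  computable (S n) (fun l => natrec (F (tl l)) (fun m r => G (m :: r :: tl l)) (hd 0 l)).
Proof.
  intros [f Hf] [g Hg]. exists (RPrim f g). intros [|k xs] L; simpl in L; [discriminate|].
  injection L as L. simpl. induction k; simpl.
  - constructor. auto.
  - econstructor; [exact IHk|]. apply Hg. simpl; lia.
Qed.

Lemma map_nth_seq l pre : map (fun i => nth i (pre ++ l) 0) (seq (length pre) (length l)) = l.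
Proof.
  revert pre. induction l as [|x l IH]; intros pre; simpl; auto. f_equal.
  - rewrite app_nth2, Nat.sub_diag by lia. reflexivity.
  - specialize (IH (pre ++ [x])). rewrite <- app_assoc, length_app in IH. simpl in IH.
    rewrite Nat.add_comm in IH. exact IH.
Qed.

Lemma Forall_computable_projs m k n : Forall (computable m) (map (fun i l => nth i l 0) (seq k n)).
Proof.
  apply Forall_forall. intros G HG. apply in_map_iff in HG as [i [<- _]]. apply computable_proj.
Qed.

Lemma map_apply_projs l k n :
  map (fun G : list nat -> nat => G l) (map (fun i l => nth i l 0) (seq k n))
  = map (fun i => nth i l 0) (seq k n).
Proof. rewrite map_map. reflexivity. Qed.

Lemma map_nth_seq_skipn l k n : length l = k + n -> map (fun i => nth i l 0) (seq k n) = skipn k l.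
Proof.
  intros L.
  assert (length (firstn k l) = k) as E1 by (rewrite length_firstn; lia).
  assert (length (skipn k l) = n) as E2 by (rewrite length_skipn; lia).
  pose proof (map_nth_seq (skipn k l) (firstn k l)) as M.
  rewrite firstn_skipn, E1, E2 in M. exact M.
Qed.

Lemma computable_skipn n k C : computable n C -> computable (k + n) (fun l => C (skipn k l)).
Proof.
  intros H. eapply computable_ext.
  - apply (computable_comp n (k + n) C _ H (Forall_computable_projs (k + n) k n)).
    rewrite length_map, length_seq; auto.
  - intros xs L. simpl. rewrite map_apply_projs, map_nth_seq_skipn by lia. reflexivity.
Qed.

Lemma computable_subst_hd n H A :
  computable (S n) H -> computable n A -> computable n (fun xs => H (A xs :: xs)).
Proof.
  intros PH PA. eapply computable_ext.
  - apply (computable_comp (S n) n H (A :: map (fun i l => nth i l 0) (seq 0 n)) PH).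
    + constructor; auto. apply Forall_computable_projs.
    + simpl. rewrite length_map, length_seq; auto.
  - intros xs L. simpl. rewrite map_apply_projs, map_nth_seq_skipn by lia. reflexivity.
Qed.

Lemma computable_prefix_args k j F Gs :
  computable (length Gs + j) F -> Forall (computable (k + j)) Gs ->
  computable (k + j) (fun l => F (map (fun G => G l) Gs ++ skipn k l)).
Proof.
  intros PF PG. eapply computable_ext.
  - apply (computable_comp _ (k + j) F (Gs ++ map (fun i l => nth i l 0) (seq k j)) PF).
    + apply Forall_app; split; auto. apply Forall_computable_projs.
    + rewrite length_app, length_map, length_seq; auto.
  - intros xs L. cbv beta. rewrite map_app, map_apply_projs, map_nth_seq_skipn by lia. reflexivity.
Qed.

Lemma computable_natrec n K B G :
  computable n K -> computable n B -> computable (S (S n)) G ->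
  computable n (fun xs => natrec (B xs) (fun m r => G (m :: r :: xs)) (K xs)).
Proof. intros PK PB PG. exact (computable_subst_hd n _ K (computable_prim_rec n B G PB PG) PK). Qed.

Lemma computable_succ n A : computable n A -> computable n (fun xs => S (A xs)).
Proof.
  intros PA. apply (computable_comp 1 n (fun l => S (hd 0 l)) [A]); auto.
  exists RSucc. intros [|x []] L; simpl in L; try discriminate. constructor.
Qed.

Lemma computable_drop_second n G :
  computable (S n) G -> computable (S (S n)) (fun l => G (hd 0 l :: skipn 2 l)).
Proof.
  intros PG. eapply computable_ext.
  - apply (computable_comp (S n) (S (S n)) G
      ((fun l => nth 0 l 0) :: map (fun i l => nth i l 0) (seq 2 n)) PG).
    + constructor; [apply computable_proj|apply Forall_computable_projs].
    + simpl. rewrite length_map, length_seq; auto.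
  - intros xs L. simpl. rewrite map_apply_projs, map_nth_seq_skipn by lia. destruct xs; reflexivity.
Qed.

Lemma computable_add n A B :
  computable n A -> computable n B -> computable n (fun xs => A xs + B xs).
Proof.
  intros PA PB. eapply computable_ext.
  - apply (computable_natrec n A B (fun l => S (nth 1 l 0))); auto.
    apply computable_succ, computable_proj.
  - intros xs _. unfold natrec. induction (A xs); simpl; auto.
Qed.

Lemma computable_pred n A : computable n A -> computable n (fun xs => pred (A xs)).
Proof.
  intros PA. eapply computable_ext.
  - apply (computable_natrec n A (fun _ => 0) (fun l => nth 0 l 0)); auto.
    + apply computable_const.
    + apply computable_proj.
  - intros xs _. unfold natrec. destruct (A xs); simpl; auto.
Qed.

Lemma computable_sub n A B :
  computable n A -> computable n B -> computable n (fun xs => A xs - B xs).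
Proof.
  intros PA PB. eapply computable_ext.
  - apply (computable_natrec n B A (fun l => pred (nth 1 l 0))); auto.
    apply computable_pred, computable_proj.
  - intros xs _. unfold natrec. induction (B xs); simpl in *; lia.
Qed.

Lemma computable_mul n A B :
  computable n A -> computable n B -> computable n (fun xs => A xs * B xs).
Proof.
  intros PA PB. eapply computable_ext.
  - apply (computable_natrec n A (fun _ => 0) (fun l => nth 1 l 0 + B (skipn 2 l))); auto.
    + apply computable_const.
    + apply computable_add; [apply computable_proj|apply (computable_skipn n 2 B PB)].
  - intros xs _. unfold natrec. induction (A xs); simpl in *; lia.
Qed.

Definition ifz (a b c : nat) := match a with 0 => b | S _ => c end.

Lemma computable_ifz n A B C : computable n A -> computable n B -> computable n C ->
  computable n (fun xs => ifz (A xs) (B xs) (C xs)).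
Proof.
  intros PA PB PC. eapply computable_ext.
  - apply (computable_natrec n A B (fun l => C (skipn 2 l))); auto. apply (computable_skipn n 2 C PC).
  - intros xs _. unfold natrec, ifz. destruct (A xs); simpl; auto.
Qed.

Lemma computable_eqb n A B :
  computable n A -> computable n B -> computable n (fun xs => if A xs =? B xs then 1 else 0).
Proof.
  intros PA PB. eapply computable_ext.
  - apply (computable_ifz n (fun xs => (A xs - B xs) + (B xs - A xs)) (fun _ => 1) (fun _ => 0)).
    + apply computable_add; apply computable_sub; auto.
    + apply computable_const.
    + apply computable_const.
  - intros xs _. unfold ifz. destruct (A xs =? B xs) eqn:E.
    + apply Nat.eqb_eq in E. rewrite E, Nat.sub_diag. reflexivity.
    + apply Nat.eqb_neq in E. destruct (A xs - B xs + (B xs - A xs)) eqn:E2; auto. lia.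
Qed.

Definition bsum (b : nat) (g : nat -> nat) : nat := natrec 0 (fun j r => r + g j) b.

Lemma computable_bsum n G Bd : computable (S n) G -> computable n Bd ->
  computable n (fun xs => bsum (Bd xs) (fun j => G (j :: xs))).
Proof.
  intros PG PB.
  apply (computable_natrec n Bd (fun _ => 0) (fun l => nth 1 l 0 + G (hd 0 l :: skipn 2 l))); auto.
  - apply computable_const.
  - apply computable_add; [apply computable_proj|apply computable_drop_second, PG].
Qed.

Lemma computable_prod_list n Gs :
  Forall (computable n) Gs -> computable n (fun xs => fold_right Nat.mul 1 (map (fun G => G xs) Gs)).
Proof. induction 1; simpl; [apply computable_const|apply computable_mul; auto]. Qed.

(** * Bounded evaluation of mu-recursive programs *)

Definition option_list (os : list (option nat)) : option (list nat) :=
  fold_right (fun o acc => match o, acc with Some y, Some ys => Some (y :: ys) | _, _ => None end)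
    (Some []) os.

Definition code_option (o : option nat) : nat := match o with None => 0 | Some y => S y end.

(* Search state of a minimisation after [j] steps: [0] = still searching, [1] = stuck on an
   undefined value, [S (S y)] = found the least zero [y]. *)
Definition mu_step (F : nat -> option nat) (j s : nat) : nat :=
  if s =? 0 then match F j with None => 1 | Some 0 => S (S j) | Some (S _) => 0 end else s.

Definition mu_state (F : nat -> option nat) (j : nat) : nat := nat_rect (fun _ => nat) 0 (mu_step F) j.

Definition mu_result (s : nat) : option nat := match s with S (S y) => Some y | _ => None end.

(* Every minimisation searches below [k] only, which makes evaluation total. *)
Fixpoint eval_bounded (k : nat) (f : recf) (xs : list nat) {struct f} : option nat :=
  match f with
  | RZero => Some 0
  | RSucc => match xs with x :: _ => Some (S x) | [] => None end
  | RProj i => if i <? length xs then Some (nth i xs 0) else None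
  | RComp g gs =>
      match option_list (map (fun h => eval_bounded k h xs) gs) with
      | Some ys => eval_bounded k g ys
      | None => None
      end
  | RPrim g h =>
      match xs with
      | [] => None
      | m :: xs' =>
          nat_rect (fun _ => option nat) (eval_bounded k g xs')
            (fun m' o => match o with Some r => eval_bounded k h (m' :: r :: xs') | None => None end) m
      end
  | RMu g => mu_result (mu_state (fun y => eval_bounded k g (y :: xs)) k)
  end.

Fixpoint recf_nested_ind (P : recf -> Prop) (HZ : P RZero) (HS : P RSucc)
  (HP : forall i, P (RProj i))
  (HC : forall g gs, P g -> Forall P gs -> P (RComp g gs))
  (HR : forall g h, P g -> P h -> P (RPrim g h))
  (HM : forall g, P g -> P (RMu g)) (f : recf) {struct f} : P f :=
  match f with
  | RZero => HZ
  | RSucc => HS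
  | RProj i => HP i
  | RComp g gs =>
      HC g gs (recf_nested_ind P HZ HS HP HC HR HM g)
        ((fix go (l : list recf) : Forall P l :=
            match l with
            | [] => Forall_nil _
            | x :: t => Forall_cons _ (recf_nested_ind P HZ HS HP HC HR HM x) (go t)
            end) gs)
  | RPrim g h => HR g h (recf_nested_ind P HZ HS HP HC HR HM g) (recf_nested_ind P HZ HS HP HC HR HM h)
  | RMu g => HM g (recf_nested_ind P HZ HS HP HC HR HM g)
  end.

Lemma mu_state_sound F j :
  (mu_state F j = 0 -> forall z, z < j -> exists v, F z = Some (S v)) /\
  (forall y, mu_state F j = S (S y) ->
     F y = Some 0 /\ forall z, z < y -> exists v, F z = Some (S v)).
Proof.
  induction j as [|j [IH1 IH2]].
  - split; [intros _ z hz; lia|intros y H; discriminate].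
  - unfold mu_state in *. simpl. unfold mu_step at 1 3.
    destruct (nat_rect (fun _ => nat) 0 (mu_step F) j) as [|s] eqn:Es; simpl.
    + destruct (F j) as [[|v]|] eqn:Ej; split; try discriminate.
      * intros y Hy. injection Hy as <-. split; auto.
      * intros _ z hz. destruct (Nat.eq_dec z j) as [->|]; eauto. apply IH1; auto; lia.
    + split; [discriminate|]. intros y Hy. apply IH2. exact Hy.
Qed.

Lemma mu_state_complete F y :
  F y = Some 0 -> (forall z, z < y -> exists v, F z = Some (S v)) ->
  forall j, (j <= y -> mu_state F j = 0) /\ (y < j -> mu_state F j = S (S y)).
Proof.
  intros Hy Hz. induction j as [|j [IH1 IH2]].
  - split; auto. lia.
  - unfold mu_state in *. simpl. split.
    + intros hj. rewrite IH1 by lia. unfold mu_step. simpl. destruct (Hz j) as [v ->]; [lia|auto].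
    + intros hj. destruct (Nat.eq_dec j y) as [->|].
      * rewrite IH1 by lia. unfold mu_step. simpl. rewrite Hy. auto.
      * rewrite IH2 by lia. reflexivity.
Qed.

Lemma eval_bounded_sound f k xs y : eval_bounded k f xs = Some y -> eval f xs y.
Proof.
  revert k xs y.
  induction f as [| |i|g gs IHg IHgs|g h IHg IHh|g IHg] using recf_nested_ind;
    intros k xs y Hev; simpl in Hev.
  - injection Hev as <-. constructor.
  - destruct xs; try discriminate. injection Hev as <-. constructor.
  - destruct (i <? length xs) eqn:E; try discriminate. injection Hev as <-.
    constructor. apply Nat.ltb_lt; auto.
  - destruct (option_list (map (fun h => eval_bounded k h xs) gs)) as [ys|] eqn:E; try discriminate.
    econstructor; [|eauto]. clear Hev IHg. revert ys E.
    induction IHgs as [|x l Hx Hl IHl]; intros ys E; simpl in E.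
    + injection E as <-. constructor.
    + destruct (eval_bounded k x xs) eqn:E1; try discriminate.
      destruct (option_list (map (fun h => eval_bounded k h xs) l)) eqn:E2; try discriminate.
      injection E as <-. constructor; eauto.
  - destruct xs as [|m xs]; try discriminate. revert y Hev. induction m; simpl; intros y Hev.
    + constructor. eauto.
    + destruct (nat_rect _ _ _ m) eqn:E; try discriminate. econstructor; eauto.
  - unfold mu_result in Hev.
    destruct (mu_state (fun y0 => eval_bounded k g (y0 :: xs)) k) as [|[|s]] eqn:E; try discriminate.
    injection Hev as <-.
    destruct (proj2 (mu_state_sound (fun y0 => eval_bounded k g (y0 :: xs)) k) _ E) as [Hy Hz].
    constructor; [eauto|]. intros z hz. destruct (Hz z hz) as [v Hv]. eauto.
Qed.

Definition eventually (P : nat -> Prop) : Prop := exists K, forall k, K <= k -> P k.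

Lemma eventually_forall_lt (P : nat -> nat -> Prop) y :
  (forall z, z < y -> eventually (P z)) -> eventually (fun k => forall z, z < y -> P z k).
Proof.
  induction y as [|y IHy]; intros H; [exists 0; intros; lia|].
  destruct IHy as [K1 H1]; [intros; apply H; lia|].
  destruct (H y) as [K2 H2]; [lia|].
  exists (K1 + K2). intros k hk z hz. destruct (Nat.eq_dec z y) as [->|]; [apply H2|apply H1]; lia.
Qed.

Lemma eventually_and P Q : eventually P -> eventually Q -> eventually (fun k => P k /\ Q k).
Proof. intros [K1 H1] [K2 H2]. exists (K1 + K2). intros k hk. split; [apply H1|apply H2]; lia. Qed.

Fixpoint eval_bounded_complete f xs y (H : eval f xs y) {struct H} :
  eventually (fun k => eval_bounded k f xs = Some y)
with evals_bounded_complete gs xs ys (H : evals gs xs ys) {struct H} :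
  eventually (fun k => option_list (map (fun h => eval_bounded k h xs) gs) = Some ys).
Proof.
  - destruct H as [xs|x xs|i xs Hi|f gs xs ys y Hgs Hf|f g xs y Hf|f g n xs r y Hr Hg|f xs y Hy Hz].
    + exists 0; reflexivity.
    + exists 0; reflexivity.
    + exists 0; intros; simpl. apply Nat.ltb_lt in Hi. rewrite Hi. reflexivity.
    + destruct (eventually_and _ _ (evals_bounded_complete _ _ _ Hgs) (eval_bounded_complete _ _ _ Hf))
        as [K HK].
      exists K. intros k hk. simpl. destruct (HK k hk) as [-> ->]. reflexivity.
    + destruct (eval_bounded_complete _ _ _ Hf) as [K HK]. exists K. intros k hk. simpl. auto.
    + destruct (eventually_and _ _ (eval_bounded_complete _ _ _ Hr) (eval_bounded_complete _ _ _ Hg))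
        as [K HK].
      exists K. intros k hk. destruct (HK k hk) as [E1 E2]. simpl in E1 |- *. rewrite E1. exact E2.
    + assert (Hz' : forall z, z < y ->
        eventually (fun k => exists v, eval_bounded k f (z :: xs) = Some (S v))).
      { intros z hz. destruct (Hz z hz) as [v Hv].
        destruct (eval_bounded_complete _ _ _ Hv) as [K HK]. exists K. eauto. }
      destruct (eventually_and _ _ (eval_bounded_complete _ _ _ Hy) (eventually_forall_lt _ y Hz'))
        as [K HK].
      exists (K + S y). intros k hk. destruct (HK k ltac:(lia)) as [E1 E2]. simpl.
      rewrite (proj2 (mu_state_complete (fun y0 => eval_bounded k f (y0 :: xs)) y E1 E2 k)) by lia.
      reflexivity.
  - destruct H as [xs|g gs xs y ys Hg Hgs].
    + exists 0; reflexivity.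
    + destruct (eventually_and _ _ (eval_bounded_complete _ _ _ Hg) (evals_bounded_complete _ _ _ Hgs))
        as [K HK].
      exists K. intros k hk. simpl. destruct (HK k hk) as [-> ->]. reflexivity.
Qed.

Lemma eval_deterministic f xs y1 y2 : eval f xs y1 -> eval f xs y2 -> y1 = y2.
Proof.
  intros H1 H2.
  destruct (eventually_and _ _ (eval_bounded_complete _ _ _ H1) (eval_bounded_complete _ _ _ H2))
    as [K HK].
  destruct (HK K (le_n K)) as [E1 E2]. congruence.
Qed.

Lemma option_list_code os :
  (option_list os = None /\ fold_right Nat.mul 1 (map code_option os) = 0) \/
  (option_list os = Some (map (fun o => pred (code_option o)) os) /\
   fold_right Nat.mul 1 (map code_option os) <> 0).
Proof.
  induction os as [|o os IH]; simpl; [right; split; auto|].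
  destruct o as [y|]; simpl.
  - destruct IH as [[-> ->]|[-> H]]; [left; split; auto; lia|right; split; auto; lia].
  - left. destruct (option_list os); auto.
Qed.

Definition eval_code (f : recf) (l : list nat) : nat := code_option (eval_bounded (hd 0 l) f (tl l)).

Lemma computable_eval_code_succ n : computable (S n) (eval_code RSucc).
Proof.
  destruct n as [|n].
  - eapply computable_ext; [apply (computable_const _ 0)|].
    intros [|k [|x xs]] L; simpl in L; try discriminate. reflexivity.
  - eapply computable_ext; [apply computable_succ, computable_succ, (computable_proj _ 1)|].
    intros [|k [|x xs]] L; simpl in L; try discriminate. reflexivity.
Qed.

Lemma computable_eval_code_proj i n : computable (S n) (eval_code (RProj i)).
Proof.
  destruct (Nat.lt_ge_cases i n) as [hi|hi].
  - eapply computable_ext; [apply computable_succ, (computable_proj _ (S i))|].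
    intros [|k xs] L; simpl in L; try discriminate. injection L as L.
    unfold eval_code; simpl. replace (i <? length xs) with true; [reflexivity|].
    symmetry; apply Nat.ltb_lt; lia.
  - eapply computable_ext; [apply (computable_const _ 0)|].
    intros [|k xs] L; simpl in L; try discriminate. injection L as L.
    unfold eval_code; simpl. replace (i <? length xs) with false; [reflexivity|].
    symmetry; apply Nat.ltb_ge; lia.
Qed.

Lemma computable_eval_code_comp g gs n :
  (forall n, computable (S n) (eval_code g)) ->
  Forall (fun h => forall n, computable (S n) (eval_code h)) gs ->
  computable (S n) (eval_code (RComp g gs)).
Proof.
  intros IHg IHgs. set (Cs := map eval_code gs).
  assert (FC : Forall (computable (S n)) Cs).
  { unfold Cs. apply Forall_map. eapply Forall_impl; [|exact IHgs]. intros a Ha; apply Ha. }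
  eapply computable_ext.
  - apply (computable_ifz _ (fun l => fold_right Nat.mul 1 (map (fun G => G l) Cs)) (fun _ => 0)
      (fun l => eval_code g (map (fun G => G l)
         ((fun l => nth 0 l 0) :: map (fun C l => pred (C l)) Cs)))).
    + apply computable_prod_list; auto.
    + apply computable_const.
    + apply computable_comp with (m := S (length gs)); [apply IHg| |].
      * constructor; [apply computable_proj|]. apply Forall_map.
        eapply Forall_impl; [|exact FC]. intros a Ha. apply computable_pred, Ha.
      * simpl; unfold Cs; rewrite !length_map; auto.
  - intros [|k xs] L; simpl in L; try discriminate.
    unfold Cs. rewrite !map_map. unfold eval_code at 1 3. simpl.
    destruct (option_list_code (map (fun h => eval_bounded k h xs) gs)) as [[E1 E2]|[E1 E2]].
    + rewrite map_map in E2. unfold eval_code. simpl. rewrite E2, E1. reflexivity.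
    + rewrite map_map in E2, E1. unfold eval_code in *. simpl in *. rewrite E1.
      destruct (fold_right Nat.mul 1 (map (fun x => code_option (eval_bounded k x xs)) gs)) eqn:E3;
        [congruence|].
      simpl. rewrite map_map. reflexivity.
Qed.

Lemma computable_eval_code_prim g h n :
  (forall n, computable (S n) (eval_code g)) -> (forall n, computable (S n) (eval_code h)) ->
  computable (S n) (eval_code (RPrim g h)).
Proof.
  intros IHg IHh. destruct n as [|n].
  - eapply computable_ext; [apply (computable_const _ 0)|].
    intros [|k [|x xs]] L; simpl in L; try discriminate. reflexivity.
  - assert (PB : computable (2 + n)
      (fun l => eval_code g (map (fun G => G l) [fun l => nth 0 l 0] ++ skipn 2 l))).
    { apply computable_prefix_args; [apply IHg|]. repeat constructor. apply computable_proj. }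
    assert (PG : computable (4 + n) (fun l => ifz (nth 1 l 0) 0
      (eval_code h (map (fun G => G l)
         [fun l => nth 2 l 0; fun l => nth 0 l 0; fun l => pred (nth 1 l 0)] ++ skipn 4 l)))).
    { apply computable_ifz; [apply computable_proj|apply computable_const|].
      apply computable_prefix_args; [apply IHh|].
      repeat constructor; try apply computable_proj. apply computable_pred, computable_proj. }
    eapply computable_ext;
      [apply (computable_natrec _ (fun l => nth 1 l 0) _ _ (computable_proj _ 1) PB PG)|].
    intros [|k [|m xs]] L; simpl in L; try discriminate.
    unfold eval_code, natrec. simpl. induction m as [|m IH]; simpl; [reflexivity|].
    rewrite IH. destruct (nat_rect (fun _ => option nat) _ _ m); reflexivity.
Qed.

Lemma computable_eval_code_mu g n :
  (forall n, computable (S n) (eval_code g)) -> computable (S n) (eval_code (RMu g)).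
Proof.
  intros IHg.
  set (Cg := fun l =>
    eval_code g (map (fun G => G l) [fun l => nth 2 l 0; fun l => nth 0 l 0] ++ skipn 3 l)).
  assert (PC : computable (3 + n) Cg).
  { apply computable_prefix_args; [apply IHg|]. repeat constructor; apply computable_proj. }
  assert (PG : computable (3 + n) (fun l =>
    ifz (nth 1 l 0) (ifz (Cg l) 1 (ifz (pred (Cg l)) (S (S (nth 0 l 0))) 0)) (nth 1 l 0))).
  { apply computable_ifz; [apply computable_proj| |apply computable_proj].
    apply computable_ifz; [exact PC|apply computable_const|].
    apply computable_ifz; [apply computable_pred, PC| |apply computable_const].
    apply computable_succ, computable_succ, computable_proj. }
  eapply computable_ext; [apply computable_pred, (computable_natrec _ (fun l => nth 0 l 0) (fun _ => 0) _
    (computable_proj _ 0) (computable_const _ 0) PG)|].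
  intros [|k xs] L; simpl in L; try discriminate.
  unfold Cg. cbv beta. simpl. unfold mu_state, natrec.
  assert (E : forall j, nat_rect (fun _ : nat => nat) 0
     (fun m r : nat => ifz r (ifz (eval_code g (k :: m :: xs)) 1
           (ifz (Init.Nat.pred (eval_code g (k :: m :: xs))) (S (S m)) 0)) r) j
     = nat_rect (fun _ => nat) 0 (mu_step (fun y => eval_bounded k g (y :: xs))) j).
  { induction j as [|j IH]; simpl; [reflexivity|]. rewrite IH.
    remember (nat_rect (fun _ => nat) 0 (mu_step (fun y => eval_bounded k g (y :: xs))) j) as s.
    unfold mu_step, eval_code. simpl. destruct s; simpl; auto.
    destruct (eval_bounded k g (j :: xs)) as [[|]|]; reflexivity. }
  rewrite E. unfold eval_code. simpl. unfold mu_result, mu_state.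
  destruct (nat_rect _ _ _ k) as [|[|]]; reflexivity.
Qed.

(* Kleene's normal form: bounded evaluation is computable uniformly in the bound. *)
Lemma computable_eval_code f n : computable (S n) (eval_code f).
Proof.
  revert n. induction f as [| |i|g gs IHg IHgs|g h IHg IHh|g IHg] using recf_nested_ind; intros n.
  - eapply computable_ext; [apply (computable_const _ 1)|]. reflexivity.
  - apply computable_eval_code_succ.
  - apply computable_eval_code_proj.
  - apply computable_eval_code_comp; auto.
  - apply computable_eval_code_prim; auto.
  - apply computable_eval_code_mu; auto.
Qed.


(** * Sigma_1 relations *)

Definition sigma1 (n : nat) (P : list nat -> Prop) : Prop :=
  exists H, computable (S n) H /\
    forall xs, length xs = n -> (P xs <-> exists k, H (k :: xs) <> 0).

Lemma sigma1_ext n P Q : sigma1 n P -> (forall xs, length xs = n -> (P xs <-> Q xs)) -> sigma1 n Q.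
Proof. intros [H [PH E]] E2. exists H. split; auto. intros xs L. rewrite <- E2 by auto. auto. Qed.

Lemma bsum_neq0 b g : bsum b g <> 0 <-> exists j, j < b /\ g j <> 0.
Proof.
  unfold bsum, natrec. induction b as [|b IH]; simpl.
  - split; [lia|intros [j [hj _]]; lia].
  - rewrite Nat.add_comm. split.
    + intros H. destruct (g b) eqn:E; [|exists b; split; auto; lia].
      simpl in H. apply IH in H as [j [hj H]]. exists j; split; auto.
    + intros [j [hj H]]. destruct (Nat.eq_dec j b) as [->|]; [lia|].
      assert (nat_rect (fun _ => nat) 0 (fun j r => r + g j) b <> 0); [|lia].
      apply IH. exists j; split; auto; lia.
Qed.

Lemma computable_bsum_upto n H :
  computable (S n) H -> computable (S n) (fun l => bsum (S (hd 0 l)) (fun a => H (a :: tl l))).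
Proof.
  intros PH. eapply computable_ext.
  - apply (computable_bsum (S n) (fun l => H (hd 0 l :: skipn 2 l)) (fun l => S (nth 0 l 0))).
    + apply computable_drop_second, PH.
    + apply computable_succ, computable_proj.
  - intros [|k xs] L; reflexivity.
Qed.

Lemma computable_bsum_second n H : computable (S (S n)) H ->
  computable (S (S n)) (fun l => bsum (S (nth 1 l 0)) (fun k => H (k :: nth 0 l 0 :: skipn 2 l))).
Proof.
  intros PH. eapply computable_ext.
  - apply (computable_bsum (S (S n))
      (fun l => H (map (fun G => G l) [fun l => nth 0 l 0; fun l => nth 1 l 0] ++ skipn 3 l))
      (fun l => S (nth 1 l 0))).
    + apply (computable_prefix_args 3 n); [exact PH|]. repeat constructor; apply computable_proj.
    + apply computable_succ, computable_proj.
  - intros [|m [|w xs]] L; reflexivity.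
Qed.

Lemma sigma1_neq0 n D : computable n D -> sigma1 n (fun xs => D xs <> 0).
Proof.
  intros PD. exists (fun l => D (skipn 1 l)). split; [apply (computable_skipn n 1 D PD)|].
  intros xs L. simpl. split; [intros H; exists 0; auto|intros [_ H]; auto].
Qed.

Lemma sigma1_and n P Q : sigma1 n P -> sigma1 n Q -> sigma1 n (fun xs => P xs /\ Q xs).
Proof.
  intros [H1 [P1 E1]] [H2 [P2 E2]].
  exists (fun l => bsum (S (hd 0 l)) (fun a => H1 (a :: tl l)) *
                   bsum (S (hd 0 l)) (fun a => H2 (a :: tl l))).
  split; [apply computable_mul; apply computable_bsum_upto; auto|].
  intros xs L. rewrite E1, E2 by auto. split.
  - intros [[k1 K1] [k2 K2]]. exists (k1 + k2). cbv beta; cbn [hd tl].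
    assert (bsum (S (k1 + k2)) (fun a => H1 (a :: xs)) <> 0)
      by (apply bsum_neq0; exists k1; split; auto; lia).
    assert (bsum (S (k1 + k2)) (fun a => H2 (a :: xs)) <> 0)
      by (apply bsum_neq0; exists k2; split; auto; lia).
    nia.
  - intros [k K]. cbv beta in K; cbn [hd tl] in K.
    assert (bsum (S k) (fun a => H1 (a :: xs)) <> 0) as A1 by (intros E; rewrite E in K; lia).
    assert (bsum (S k) (fun a => H2 (a :: xs)) <> 0) as A2 by (intros E; rewrite E in K; lia).
    apply bsum_neq0 in A1 as [j1 [_ J1]], A2 as [j2 [_ J2]]. eauto.
Qed.

Lemma sigma1_or n P Q : sigma1 n P -> sigma1 n Q -> sigma1 n (fun xs => P xs \/ Q xs).
Proof.
  intros [H1 [P1 E1]] [H2 [P2 E2]].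
  exists (fun l => H1 l + H2 l). split; [apply computable_add; auto|].
  intros xs L. rewrite E1, E2 by auto. split.
  - intros [[k K]|[k K]]; exists k; lia.
  - intros [k K]. destruct (H1 (k :: xs)) eqn:E; [right|left]; exists k; lia.
Qed.

Lemma sigma1_ex n P : sigma1 (S n) P -> sigma1 n (fun xs => exists m, P (m :: xs)).
Proof.
  intros [H [PH E]].
  exists (fun l => bsum (S (hd 0 l)) (fun m => bsum (S (hd 0 l)) (fun k => H (k :: m :: tl l)))).
  split.
  - eapply computable_ext.
    + apply (computable_bsum (S n) _ (fun l => S (nth 0 l 0)) (computable_bsum_second n H PH)).
      apply computable_succ, computable_proj.
    + intros [|w xs] L; reflexivity.
  - intros xs L. split.
    + intros [m Hm]. apply E in Hm as [k K]; [|simpl; auto].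
      exists (m + k). cbv beta; cbn [hd tl].
      apply bsum_neq0. exists m. split; [lia|]. apply bsum_neq0. exists k. split; auto; lia.
    + intros [w W]. cbv beta in W; cbn [hd tl] in W.
      apply bsum_neq0 in W as [m [_ W]]. apply bsum_neq0 in W as [k [_ W]].
      exists m. apply E; [simpl; auto|]. eauto.
Qed.

Lemma bounded_choice (Q : nat -> nat -> Prop) b : (forall i, i < b -> exists k, Q i k) ->
  exists w, forall i, i < b -> exists k, k <= w /\ Q i k.
Proof.
  induction b as [|b IHb]; intros H; [exists 0; intros; lia|].
  destruct IHb as [w1 W1]; [intros; apply H; lia|]. destruct (H b) as [k Hk]; [lia|].
  exists (w1 + k). intros i hi. destruct (Nat.eq_dec i b) as [->|].
  - exists k; split; auto; lia.
  - destruct (W1 i) as [k' [? ?]]; [lia|]. exists k'; split; auto; lia.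
Qed.

(* A single search index [w] bounds witnesses for all [i < Bd xs], by [bounded_choice]. *)
Lemma sigma1_ball n P Bd :
  sigma1 (S n) P -> computable n Bd -> sigma1 n (fun xs => forall i, i < Bd xs -> P (i :: xs)).
Proof.
  intros [H [PH E]] PB.
  set (I := fun w i xs => ifz (bsum (S w) (fun k => H (k :: i :: xs))) 1 0).
  exists (fun l => ifz (bsum (Bd (tl l)) (fun i => I (hd 0 l) i (tl l))) 1 0). split.
  - apply computable_ifz; [|apply computable_const|apply computable_const].
    eapply computable_ext.
    + apply (computable_bsum (S n) (fun l => I (nth 1 l 0) (nth 0 l 0) (skipn 2 l))).
      * apply computable_ifz; [exact (computable_bsum_second n H PH)| |]; apply computable_const.
      * apply (computable_skipn n 1 Bd PB).
    + intros [|w xs] L; reflexivity.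
  - intros xs L. cbv beta; cbn [hd tl]. split.
    + intros HA. destruct (bounded_choice (fun i k => H (k :: i :: xs) <> 0) (Bd xs)) as [w W].
      { intros i hi. apply E; simpl; auto. }
      exists w. destruct (bsum (Bd xs) _) eqn:ES; [simpl; lia|]. exfalso.
      assert (NZ : bsum (Bd xs) (fun i => I w i xs) <> 0) by lia.
      apply bsum_neq0 in NZ as [i [hi NZ]]. destruct (W i hi) as [k [hk K]].
      assert (bsum (S w) (fun k => H (k :: i :: xs)) <> 0)
        by (apply bsum_neq0; exists k; split; auto; lia).
      unfold I in NZ. destruct (bsum (S w) _); simpl in NZ; auto.
    + intros [w W] i hi. apply E; [simpl; auto|].
      destruct (bsum (Bd xs) _) eqn:ES; [|simpl in W; lia].
      destruct (bsum (S w) (fun k => H (k :: i :: xs))) eqn:EB.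
      * exfalso. assert (NZ : bsum (Bd xs) (fun i => I w i xs) <> 0); [|lia].
        apply bsum_neq0. exists i. split; auto. unfold I. rewrite EB. simpl; lia.
      * assert (NZ : bsum (S w) (fun k => H (k :: i :: xs)) <> 0) by lia.
        apply bsum_neq0 in NZ as [k [_ K]]. eauto.
Qed.

Lemma sigma1_comp m n P Gs : sigma1 m P -> Forall (computable n) Gs -> length Gs = m ->
  sigma1 n (fun xs => P (map (fun G => G xs) Gs)).
Proof.
  intros [H [PH E]] PG LG.
  exists (fun l => H (map (fun G => G l) ((fun l => nth 0 l 0) :: map (fun G l => G (skipn 1 l)) Gs))).
  split.
  - apply (computable_comp (S m)); [exact PH| |simpl; rewrite length_map; auto].
    constructor; [apply computable_proj|]. apply Forall_map.
    eapply Forall_impl; [|exact PG]. intros a Ha. apply (computable_skipn n 1 a Ha).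
  - intros xs L. rewrite E by (rewrite length_map; auto). simpl.
    split; intros [k K]; exists k; rewrite map_map in *; simpl in *; auto.
Qed.

Lemma sigma1_ce W : ce W -> sigma1 1 (fun l => W (hd 0 l)).
Proof.
  intros [f Hf]. exists (eval_code f). split; [apply computable_eval_code|].
  intros [|x []] L; simpl in L; try discriminate. simpl. rewrite Hf. unfold eval_code. simpl. split.
  - intros [y Hy]. destruct (eval_bounded_complete _ _ _ Hy) as [K HK].
    exists K. rewrite HK by lia. simpl; lia.
  - intros [k K]. destruct (eval_bounded k f [x]) as [y|] eqn:E; [|simpl in K; lia].
    exists y. eapply eval_bounded_sound; eauto.
Qed.

Lemma least_witness (P : nat -> Prop) : (exists n, P n) -> exists n, P n /\ forall z, z < n -> ~ P z.
Proof.
  intros [n Hn]. induction n as [n IH] using (well_founded_induction lt_wf).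
  destruct (classic (exists z, z < n /\ P z)) as [[z [hz Pz]]|NE].
  - apply (IH z hz Pz).
  - exists n. split; auto. intros z hz Pz. apply NE; eauto.
Qed.

Lemma ce_sigma1 W : sigma1 1 (fun l => W (hd 0 l)) -> ce W.
Proof.
  intros [H [PH E]].
  assert (PT : computable 2 (fun l => ifz (H l) 1 0))
    by (apply computable_ifz; auto; apply computable_const).
  destruct PT as [t Ht]. exists (RMu t). intros x. rewrite (E [x] eq_refl). split.
  - intros HK. destruct (least_witness (fun k => H [k; x] <> 0) HK) as [k [K Kmin]].
    exists k. constructor.
    + specialize (Ht [k; x] eq_refl). simpl in Ht. destruct (H [k; x]); [lia|exact Ht].
    + intros z hz. exists 0. specialize (Ht [z; x] eq_refl). simpl in Ht.
      destruct (H [z; x]) eqn:EZ; auto. exfalso; apply (Kmin z hz). lia.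
  - intros [y Hy]. inversion Hy as [| | | | | |f' xs' y' Hy0 Hz]; subst. exists y.
    specialize (Ht [y; x] eq_refl). pose proof (eval_deterministic _ _ _ _ Hy0 Ht) as D.
    destruct (H [y; x]); simpl in D; lia.
Qed.

(** * Arithmetic of pairing and binary codes *)

Definition odd_rec (m : nat) : nat := natrec 0 (fun _ r => ifz r 1 0) m.
Definition div2_rec (m : nat) : nat := natrec 0 (fun j r => r + odd_rec j) m.
Definition shiftr_rec (i u : nat) : nat := natrec u (fun _ r => div2_rec r) i.
Definition triangle (s : nat) : nat := natrec 0 (fun m r => r + S m) s.

Lemma odd_rec_spec m : odd_rec m = if Nat.odd m then 1 else 0.
Proof.
  unfold odd_rec, natrec. induction m; simpl; [reflexivity|].
  rewrite IHm, Nat.odd_succ, <- Nat.negb_odd. destruct (Nat.odd m); reflexivity.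
Qed.

Lemma div2_rec_spec m : div2_rec m = Nat.div2 m.
Proof.
  induction m; [reflexivity|].
  transitivity (div2_rec m + odd_rec m); [reflexivity|]. rewrite IHm, odd_rec_spec.
  pose proof (Nat.div2_odd m) as E1. pose proof (Nat.div2_odd (S m)) as E2.
  rewrite Nat.odd_succ, <- Nat.negb_odd in E2.
  destruct (Nat.odd m); simpl in *; lia.
Qed.

Lemma testbit_shiftr_rec u i : Nat.testbit u i = Nat.odd (shiftr_rec i u).
Proof.
  revert u. induction i; intros u; [reflexivity|].
  assert (E : shiftr_rec (S i) u = shiftr_rec i (Nat.div2 u)).
  { unfold shiftr_rec, natrec. clear IHi. revert u. induction i; intros u; simpl.
    - rewrite div2_rec_spec; reflexivity.
    - simpl in IHi. rewrite IHi. reflexivity. }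
  rewrite E. apply IHi.
Qed.

Lemma triangle_spec s : triangle s * 2 = s * (s + 1).
Proof. unfold triangle, natrec. induction s; simpl in *; lia. Qed.

Lemma pair_triangle a b : pair a b = triangle (a + b) + b.
Proof. unfold pair. f_equal. rewrite <- triangle_spec. apply Nat.div_mul. lia. Qed.

Lemma triangle_lt s s' : s < s' -> triangle s + s < triangle s'.
Proof. induction 1; simpl; lia. Qed.

Lemma pair_inj a b c d : pair a b = pair c d -> a = c /\ b = d.
Proof.
  rewrite !pair_triangle. intros E.
  destruct (Nat.lt_trichotomy (a + b) (c + d)) as [h|[h|h]].
  - pose proof (triangle_lt _ _ h). lia.
  - rewrite h in E. lia.
  - pose proof (triangle_lt _ _ h). lia.
Qed.

Lemma computable_odd_rec n A : computable n A -> computable n (fun xs => odd_rec (A xs)).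
Proof.
  intros PA. apply (computable_natrec n A (fun _ => 0) (fun l => ifz (nth 1 l 0) 1 0)); auto.
  - apply computable_const.
  - apply computable_ifz; [apply computable_proj|apply computable_const|apply computable_const].
Qed.

Lemma computable_div2_rec n A : computable n A -> computable n (fun xs => div2_rec (A xs)).
Proof.
  intros PA. apply (computable_natrec n A (fun _ => 0) (fun l => nth 1 l 0 + odd_rec (nth 0 l 0))); auto.
  - apply computable_const.
  - apply computable_add; [apply computable_proj|apply computable_odd_rec, computable_proj].
Qed.

Lemma computable_testbit n U I : computable n U -> computable n I ->
  computable n (fun xs => odd_rec (shiftr_rec (I xs) (U xs))).
Proof.
  intros PU PI. apply computable_odd_rec.
  apply (computable_natrec n I U (fun l => div2_rec (nth 1 l 0))); auto.
  apply computable_div2_rec, computable_proj.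
Qed.

Lemma computable_pair n A B :
  computable n A -> computable n B -> computable n (fun xs => pair (A xs) (B xs)).
Proof.
  intros PA PB. eapply computable_ext.
  - apply computable_add; [|exact PB].
    apply (computable_natrec n (fun xs => A xs + B xs) (fun _ => 0)
      (fun l => nth 1 l 0 + S (nth 0 l 0))).
    + apply computable_add; auto.
    + apply computable_const.
    + apply computable_add; [apply computable_proj|apply computable_succ, computable_proj].
  - intros xs _. rewrite pair_triangle. reflexivity.
Qed.

(** * A first-order language of c.e. relations *)

Inductive tm := TV (i : nat) | TC (c : nat) | TAdd (a b : tm) | TPair (a b : tm).

Fixpoint tm_den (t : tm) (env : list nat) : nat :=
  match t with
  | TV i => nth i env 0
  | TC c => c
  | TAdd a b => tm_den a env + tm_den b env
  | TPair a b => pair (tm_den a env) (tm_den b env)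
  end.

Lemma computable_tm_den t n : computable n (tm_den t).
Proof.
  induction t; simpl;
    [apply computable_proj|apply computable_const|apply computable_add|apply computable_pair]; auto.
Qed.

(* Variables are de Bruijn indices into the environment; [FEx] and [FBall] bind [TV 0]. *)
Inductive fm :=
  | FEq (a b : tm) | FBit (u i : tm) | FNBit (u i : tm) | FMem (W : nat -> Prop) (t : tm)
  | FAnd (p q : fm) | FOr (p q : fm) | FEx (p : fm) | FBall (b : tm) (p : fm).

Fixpoint fm_den (p : fm) (env : list nat) : Prop :=
  match p with
  | FEq a b => tm_den a env = tm_den b env
  | FBit u i => Nat.testbit (tm_den u env) (tm_den i env) = true
  | FNBit u i => Nat.testbit (tm_den u env) (tm_den i env) = false
  | FMem W t => W (tm_den t env)
  | FAnd p q => fm_den p env /\ fm_den q env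
  | FOr p q => fm_den p env \/ fm_den q env
  | FEx p => exists m, fm_den p (m :: env)
  | FBall b p => forall i, i < tm_den b env -> fm_den p (i :: env)
  end.

Fixpoint fm_ce_atoms (p : fm) : Prop :=
  match p with
  | FMem W _ => ce W
  | FAnd p q | FOr p q => fm_ce_atoms p /\ fm_ce_atoms q
  | FEx p | FBall _ p => fm_ce_atoms p
  | _ => True
  end.

Lemma sigma1_fm p : fm_ce_atoms p -> forall n, sigma1 n (fm_den p).
Proof.
  induction p as [a b|u i|u i|W t|p1 IHp1 p2 IHp2|p1 IHp1 p2 IHp2|p IHp|b p IHp];
    simpl; intros HA n.
  - eapply sigma1_ext;
      [apply sigma1_neq0, (computable_eqb _ (tm_den a) (tm_den b)); apply computable_tm_den|].
    intros xs _. simpl. destruct (tm_den a xs =? tm_den b xs) eqn:E.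
    + apply Nat.eqb_eq in E. split; intros; auto.
    + apply Nat.eqb_neq in E. split; intros; [lia|contradiction].
  - eapply sigma1_ext;
      [apply sigma1_neq0, (computable_testbit _ (tm_den u) (tm_den i)); apply computable_tm_den|].
    intros xs _. simpl. rewrite testbit_shiftr_rec, odd_rec_spec.
    destruct (Nat.odd _); split; intros; auto; lia.
  - eapply sigma1_ext.
    + apply sigma1_neq0, (computable_sub _ (fun _ => 1)); [apply computable_const|].
      apply (computable_testbit _ (tm_den u) (tm_den i)); apply computable_tm_den.
    + intros xs _. simpl. rewrite testbit_shiftr_rec, odd_rec_spec.
      destruct (Nat.odd _); split; intros; auto; try lia; discriminate.
  - apply (sigma1_comp 1 n (fun l => W (hd 0 l)) [tm_den t]); auto.
    apply sigma1_ce, HA.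
    constructor; [apply computable_tm_den|constructor].
  - apply sigma1_and; [apply IHp1|apply IHp2]; tauto.
  - apply sigma1_or; [apply IHp1|apply IHp2]; tauto.
  - apply sigma1_ex, IHp, HA.
  - apply sigma1_ball; [apply IHp, HA|apply computable_tm_den].
Qed.

Lemma ce_fm p : fm_ce_atoms p -> ce (fun x => fm_den p [x]).
Proof.
  intros HA. apply ce_sigma1. eapply sigma1_ext; [apply (sigma1_fm p HA 1)|].
  intros [|x []] L; simpl in L; try discriminate. reflexivity.
Qed.

(** * Finite sets and enumeration reducibility *)

Definition paired (P : nat -> nat -> Prop) : nat -> Prop :=
  fun y => exists a b, y = pair a b /\ P a b.

Lemma paired_pair P a b : paired P (pair a b) <-> P a b.
Proof.
  split.
  - intros [a' [b' [E H]]]. apply pair_inj in E as [-> ->]. exact H.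
  - intros H. exists a, b. auto.
Qed.

Lemma canfin_lt u i : canfin u i -> i < u.
Proof.
  unfold canfin. intros H. destruct u as [|u]; [rewrite Nat.bits_0 in H; discriminate|].
  destruct (Nat.le_gt_cases i (Nat.log2 (S u))) as [h|h].
  - pose proof (Nat.log2_lt_lin (S u)). lia.
  - rewrite Nat.bits_above_log2 in H by lia. discriminate.
Qed.

Lemma testbit_false_or_canfin u i : Nat.testbit u i = false \/ canfin u i.
Proof. unfold canfin. destruct (Nat.testbit u i); auto. Qed.

Lemma canfin_pow p i : canfin (2 ^ p) i <-> i = p.
Proof.
  unfold canfin. split.
  - intros H. destruct (Nat.eq_dec p i) as [->|n]; auto.
    rewrite Nat.pow2_bits_false in H; auto; discriminate.
  - intros ->. apply Nat.pow2_bits_true.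
Qed.

Lemma canfin_lor a b i : canfin (Nat.lor a b) i <-> canfin a i \/ canfin b i.
Proof.
  unfold canfin. rewrite Nat.lor_spec.
  destruct (Nat.testbit a i), (Nat.testbit b i); simpl; intuition.
Qed.

Lemma canfin_collect (Q : nat -> nat -> Prop) (P : nat -> Prop) u :
  (forall i, canfin u i -> exists v, Q i v /\ forall j, canfin v j -> P j) ->
  exists w, (forall j, canfin w j -> P j) /\
    forall i, canfin u i -> exists v, Q i v /\ forall j, canfin v j -> canfin w j.
Proof.
  intros H.
  assert (G : forall b, exists w, (forall j, canfin w j -> P j) /\
     forall i, i < b -> canfin u i -> exists v, Q i v /\ forall j, canfin v j -> canfin w j).
  { induction b as [|b [w [W1 W2]]].
    - exists 0. split; [|intros; lia].
      intros j Hj. unfold canfin in Hj. rewrite Nat.bits_0 in Hj; discriminate.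
    - destruct (testbit_false_or_canfin u b) as [F|T].
      + exists w. split; auto. intros i hi Hi. destruct (Nat.eq_dec i b) as [->|].
        * unfold canfin in Hi; congruence.
        * apply W2; auto; lia.
      + destruct (H b T) as [v [Qv Pv]]. exists (Nat.lor w v). split.
        * intros j Hj. apply canfin_lor in Hj as [Hj|Hj]; auto.
        * intros i hi Hi. destruct (Nat.eq_dec i b) as [->|].
          -- exists v. split; auto. intros j Hj. apply canfin_lor; auto.
          -- destruct (W2 i ltac:(lia) Hi) as [v' [Q' P']].
             exists v'. split; auto. intros j Hj; apply canfin_lor; auto. }
  destruct (G u) as [w [W1 W2]]. exists w. split; auto.
  intros i Hi. apply W2; auto. apply canfin_lt; auto.
Qed.

Lemma canfin_image (f : nat -> nat) u :
  exists w, forall j, canfin w j <-> exists i, canfin u i /\ j = f i.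
Proof.
  destruct (canfin_collect (fun i v => v = 2 ^ f i) (fun j => exists i, canfin u i /\ j = f i) u)
    as [w [W1 W2]].
  { intros i Hi. exists (2 ^ f i). split; auto. intros j Hj. apply canfin_pow in Hj. eauto. }
  exists w. intros j. split; auto.
  intros [i [Hi ->]]. destruct (W2 i Hi) as [v [-> Hv]]. apply Hv, canfin_pow. reflexivity.
Qed.

Definition fm_unpair (k : nat) (phi : fm) : fm :=
  FEx (FEx (FAnd (FEq (TV (S (S k))) (TPair (TV 1) (TV 0))) phi)).

Lemma fm_den_unpair k phi env :
  fm_den (fm_unpair k phi) env <-> exists a b, nth k env 0 = pair a b /\ fm_den phi (b :: a :: env).
Proof. reflexivity. Qed.

(* In [phi], [TV 0] is the code [u] of the finite set and [TV 1] the element [n]. *)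
Lemma ered_fm (phi : fm) (A B : nat -> Prop) : fm_ce_atoms phi ->
  (forall n, A n <-> exists u, fm_den phi [u; n; pair n u] /\ forall i, canfin u i -> B i) ->
  ered A B.
Proof.
  intros HA E. exists (fun x => fm_den (fm_unpair 0 phi) [x]). split.
  - apply ce_fm. simpl. auto.
  - intros n. rewrite E. unfold enum_op. split.
    + intros [u [Hu HB]]. exists u. split; auto. apply fm_den_unpair. exists n, u. auto.
    + intros [u [Hu HB]]. apply fm_den_unpair in Hu as [n' [u' [Ep Hu]]].
      simpl in Ep. apply pair_inj in Ep as [<- <-]. eauto.
Qed.

Lemma ered_ext (A A' B : nat -> Prop) : (forall n, A n <-> A' n) -> ered A B -> ered A' B.
Proof. intros E [G [HG HE]]. exists G. split; auto. intros n. rewrite <- E. auto. Qed.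

Lemma enum_op_mono G (B B' : nat -> Prop) n :
  (forall x, B x -> B' x) -> enum_op G B n -> enum_op G B' n.
Proof. intros HB [u [H1 H2]]. exists u. split; auto. Qed.

Lemma enum_op_ext G (B B' : nat -> Prop) n :
  (forall x, B x <-> B' x) -> (enum_op G B n <-> enum_op G B' n).
Proof. intros E. split; apply enum_op_mono; apply E. Qed.

(* The finite sets [D_v] used for the elements [i] of [D_u] are merged into one finite set [D_w]. *)
Lemma enum_op_compose (G : nat -> Prop) (D : nat -> nat -> Prop) (C : nat -> Prop) m :
  enum_op G (fun i => exists v, D i v /\ forall j, canfin v j -> C j) m <->
  exists w, (exists u, G (pair m u) /\ forall i, i < u -> Nat.testbit u i = false \/
      exists v, D i v /\ forall j, j < v -> Nat.testbit v j = false \/ canfin w j)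
    /\ forall j, canfin w j -> C j.
Proof.
  split.
  - intros [u [Gu Hu]]. destruct (canfin_collect D C u Hu) as [w [Cw Hw]].
    exists w. split; auto. exists u. split; auto.
    intros i _. destruct (testbit_false_or_canfin u i) as [F|T]; auto. right.
    destruct (Hw i T) as [v [Dv Vw]]. exists v. split; auto.
    intros j _. destruct (testbit_false_or_canfin v j); auto.
  - intros [w [[u [Gu Hu]] Cw]]. exists u. split; auto. intros i Hi.
    destruct (Hu i (canfin_lt _ _ Hi)) as [F|[v [Dv Hv]]]; [unfold canfin in Hi; congruence|].
    exists v. split; auto. intros j Hj. apply Cw.
    destruct (Hv j (canfin_lt _ _ Hj)) as [F|T]; auto. unfold canfin in Hj; congruence.
Qed.

Lemma ered_trans A B C : ered A B -> ered B C -> ered A C.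
Proof.
  intros [G [HG EG]] [D [HD ED]].
  apply (ered_fm (FEx (FAnd (FMem G (TPair (TV 2) (TV 0)))
           (FBall (TV 0) (FOr (FNBit (TV 1) (TV 0))
              (FEx (FAnd (FMem D (TPair (TV 1) (TV 0)))
                 (FBall (TV 0) (FOr (FNBit (TV 1) (TV 0)) (FBit (TV 4) (TV 0)))))))))));
    [simpl; tauto|].
  intros n. rewrite EG, (enum_op_ext G B _ n ED).
  exact (enum_op_compose G (fun i v => D (pair i v)) C n).
Qed.

Lemma join_even (P Q : nat -> Prop) n : join P Q (n + n) <-> P n.
Proof.
  unfold join. split.
  - intros [[k [E H]]|[k [E H]]]; [replace n with k by lia; auto|lia].
  - intros H. left. exists n. split; auto; lia.
Qed.

Lemma join_odd (P Q : nat -> Prop) n : join P Q (n + n + 1) <-> Q n.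
Proof.
  unfold join. split.
  - intros [[k [E H]]|[k [E H]]]; [lia|replace n with k by lia; auto].
  - intros H. right. exists n. split; auto; lia.
Qed.

Lemma join_cases (P Q : nat -> Prop) m :
  join P Q m -> (exists n, m = n + n /\ P n) \/ (exists n, m = n + n + 1 /\ Q n).
Proof. unfold join. intros [[k [E H]]|[k [E H]]]; [left|right]; exists k; split; auto; lia. Qed.

Lemma ered_join_l B C : ered B (join B C).
Proof.
  apply (ered_fm (FBit (TV 0) (TAdd (TV 1) (TV 1)))); [simpl; auto|].
  intros n. split.
  - intros Bn. exists (2 ^ (n + n)). split; [apply canfin_pow; auto|].
    intros i Hi. apply canfin_pow in Hi. subst. apply join_even, Bn.
  - intros [u [Hu HB]]. apply (join_even B C), HB, Hu.
Qed.

Lemma ered_paired_slice P b : ered (fun m => P m b) (paired P).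
Proof.
  apply (ered_fm (FBit (TV 0) (TPair (TV 1) (TC b)))); [simpl; auto|].
  intros m. split.
  - intros Pm. exists (2 ^ pair m b). split; [apply canfin_pow; auto|].
    intros i Hi. apply canfin_pow in Hi. subst. apply paired_pair, Pm.
  - intros [u [Hu HB]]. apply paired_pair, HB, Hu.
Qed.

Lemma ered_paired_complementary P :
  ered (fun b => exists n, P (n + n) b /\ P (n + n + 1) b) (paired P).
Proof.
  apply (ered_fm (FEx (FAnd (FBit (TV 1) (TPair (TAdd (TV 0) (TV 0)) (TV 2)))
                            (FBit (TV 1) (TPair (TAdd (TAdd (TV 0) (TV 0)) (TC 1)) (TV 2))))));
    [simpl; auto|].
  intros b. split.
  - intros [n [Pe Po]]. exists (Nat.lor (2 ^ pair (n + n) b) (2 ^ pair (n + n + 1) b)). split.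
    + exists n. split; apply canfin_lor; [left|right]; apply canfin_pow; auto.
    + intros i Hi.
      apply canfin_lor in Hi as [Hi|Hi]; apply canfin_pow in Hi; subst; apply paired_pair; auto.
  - intros [u [[n [He Ho]] HB]]. exists n. split; apply paired_pair, HB; auto.
Qed.

(* Applying [G] to the [b]-th column of [W] is itself an enumeration operator applied to [W]. *)
Lemma ered_paired_enum_op_slices G W :
  ce G -> ered (paired (fun m b => enum_op G (fun a => W (pair a b)) m)) W.
Proof.
  intros HG.
  apply (ered_fm (fm_unpair 1 (FEx (FAnd (FMem G (TPair (TV 2) (TV 0)))
           (FBall (TV 0) (FOr (FNBit (TV 1) (TV 0)) (FBit (TV 4) (TPair (TV 0) (TV 2)))))))));
    [simpl; auto|].
  intros y. split.
  - intros [m [b [-> [u [Gu Hu]]]]].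
    destruct (canfin_image (fun i => pair i b) u) as [w Hw].
    exists w. split.
    + apply fm_den_unpair. exists m, b. split; auto. exists u. split; auto.
      intros i _. cbn. destruct (testbit_false_or_canfin u i) as [F|T]; [left; exact F|right].
      apply Hw. eauto.
    + intros j Hj. apply Hw in Hj as [i [Hi ->]]. auto.
  - intros [w [Hy Wb]]. apply fm_den_unpair in Hy as [m [b [Ey [u [Gu Hu]]]]].
    cbn in Ey, Hu. subst y. apply paired_pair. exists u. split; auto. intros i Hi. apply Wb.
    destruct (Hu i (canfin_lt _ _ Hi)) as [F|T]; [unfold canfin in Hi; congruence|exact T].
Qed.

(** * K-pairs *)

Lemma ered_paired_join W0 W1 U : ered W0 U -> ered W1 U ->
  ered (paired (fun a m => join (fun n => W0 (pair a n)) (fun n => W1 (pair a n)) m)) U.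
Proof.
  intros [G0 [HG0 E0]] [G1 [HG1 E1]].
  apply (ered_fm (fm_unpair 1 (FEx (FOr
     (FAnd (FEq (TV 1) (TAdd (TV 0) (TV 0))) (FMem G0 (TPair (TPair (TV 2) (TV 0)) (TV 3))))
     (FAnd (FEq (TV 1) (TAdd (TAdd (TV 0) (TV 0)) (TC 1)))
           (FMem G1 (TPair (TPair (TV 2) (TV 0)) (TV 3))))))));
    [simpl; tauto|].
  intros y. split.
  - intros [a [m [-> Jm]]].
    apply join_cases in Jm as [[n [-> Wn]]|[n [-> Wn]]];
      [apply E0 in Wn as [w [Gw Uw]]|apply E1 in Wn as [w [Gw Uw]]];
      exists w; (split; [|exact Uw]); apply fm_den_unpair; eexists a, _; (split; [reflexivity|]);
      exists n; [left|right]; (split; [reflexivity|exact Gw]).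
  - intros [w [Hy Uw]]. apply fm_den_unpair in Hy as [a [m [Ey [n [[Em Gw]|[Em Gw]]]]]];
      cbn in Ey, Em, Gw; subst y m; apply paired_pair;
      [apply join_even, E0|apply join_odd, E1]; exists w; auto.
Qed.

Lemma KPair_join T0 T1 A B C :
  KPair T0 A B -> KPair T1 A C -> ered T1 T0 -> KPair T0 A (join B C).
Proof.
  intros [W0 [E0 [H01 H02]]] [W1 [E1 [H11 H12]]] T10.
  exists (paired (fun a m => join (fun n => W0 (pair a n)) (fun n => W1 (pair a n)) m)).
  split; [apply ered_paired_join; eauto using ered_trans|split].
  - intros a m Aa Jm. apply paired_pair.
    apply join_cases in Jm as [[n [-> Bn]]|[n [-> Cn]]]; [apply join_even|apply join_odd]; auto.
  - intros a m NA NJ Wm. apply paired_pair in Wm.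
    apply join_cases in Wm as [[n [-> Wn]]|[n [-> Wn]]].
    + apply (H02 a n NA); auto. intros Bn. apply NJ, join_even, Bn.
    + apply (H12 a n NA); auto. intros Cn. apply NJ, join_odd, Cn.
Qed.

Lemma join_compl_maximal X (Y : nat -> Prop) :
  (forall n, join X (fun n => ~ X n) n -> Y n) ->
  ~ (exists n, Y (n + n) /\ Y (n + n + 1)) ->
  forall n, Y n <-> join X (fun n => ~ X n) n.
Proof.
  intros sub cons n. split; [|apply sub]. intros Yn.
  destruct (Nat.Even_or_Odd n) as [[k ->]|[k ->]]; replace (2 * k) with (k + k) in * by lia.
  - apply join_even. apply NNPP. intros NX. apply cons. exists k. split; auto. apply sub, join_odd, NX.
  - apply join_odd. intros Xk. apply cons. exists k. split; auto. apply sub, join_even, Xk.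
Qed.

Lemma KPair_ered_total (U A B X : nat -> Prop) : KPair U A B -> ~ ered B U ->
  ered (join X (fun n => ~ X n)) A -> ered (join X (fun n => ~ X n)) U.
Proof.
  intros [W [WU [HAB HnAnB]]] NBU [G [HG EG]].
  set (Z := join X (fun n => ~ X n)) in *.
  set (P := fun m b => enum_op G (fun a => W (pair a b)) m).
  assert (PU : ered (paired P) U)
    by (eapply ered_trans; [apply ered_paired_enum_op_slices, HG|exact WU]).
  assert (Z_P : forall b, B b -> forall m, Z m -> P m b).
  { intros b Bb m Zm. apply EG in Zm. eapply enum_op_mono; [|exact Zm]. auto. }
  assert (P_Z : forall b, ~ B b -> forall m, P m b -> Z m).
  { intros b NBb m Pm. apply EG. eapply enum_op_mono; [|exact Pm].
    intros a Wa. apply NNPP. intros NAa. exact (HnAnB a b NAa NBb Wa). }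
  set (S := fun b => exists n, P (n + n) b /\ P (n + n + 1) b).
  assert (S_B : forall b, S b -> B b).
  { intros b [n [Pe Po]]. apply NNPP. intros NBb.
    apply (P_Z b NBb), join_even in Pe. apply (P_Z b NBb), join_odd in Po. auto. }
  assert (SU : ered S U) by (eapply ered_trans; [apply ered_paired_complementary|exact PU]).
  destruct (classic (exists b, B b /\ ~ S b)) as [[b [Bb NSb]]|NE].
  - eapply ered_ext; [apply (join_compl_maximal X (fun m => P m b)); [apply Z_P, Bb|exact NSb]|].
    eapply ered_trans; [apply ered_paired_slice|exact PU].
  - exfalso. apply NBU. eapply ered_ext; [|exact SU].
    intros b. split; [apply S_B|]. intros Bb. apply NNPP. intros NSb. eauto.
Qed.

Theorem lemma6p3 (T0 T1 A B C : nat -> Prop) :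
  total_degree T0 -> total_degree T1 ->
  elt T0 A -> elt T1 A ->
  nontrivial_KPair T0 A B -> nontrivial_KPair T1 A C ->
  eequiv T0 T1 /\ nontrivial_KPair T0 A (join B C).
Proof.
  intros [X0 [T0X0 X0T0]] [X1 [T1X1 X1T1]] [T0A _] [T1A _] [K0 [NAT0 NBT0]] [K1 [_ NCT1]].
  assert (T10 : ered T1 T0).
  { eapply ered_trans; [exact T1X1|].
    apply (KPair_ered_total T0 A B X1 K0 NBT0). eapply ered_trans; [exact X1T1|exact T1A]. }
  assert (T01 : ered T0 T1).
  { eapply ered_trans; [exact T0X0|].
    apply (KPair_ered_total T1 A C X0 K1 NCT1). eapply ered_trans; [exact X0T0|exact T0A]. }
  split; [split; auto|].
  split; [eapply KPair_join; eauto|].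
  split; auto. intros J. apply NBT0. eapply ered_trans; [apply ered_join_l|exact J].
Qed.
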